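(* Let $U\in\mathbb{N}$ and $a_1,a_2,b_1,b_2\in\mathbb{Q}_U[\mathbf{i}]$ with $a_1\neq a_2$ and $b_1\neq b_2$. If there exist $\rho,t\in\mathbb{C}$ with $|\rho|=1$ and $b_j=\rho a_j+t$ for $j\in\{1,2\}$, then $\rho\in\mathbb{Q}_{2^{10}U^{16}}[\mathbf{i}]$ and $t\in\mathbb{Q}_{2^{22}U^{35}}[\mathbf{i}]$.
   Context: For $V\in\mathbb{N}$, $\mathbb{Q}_V=\{\pm p/q: p,q\in\{1,\dots,V\}\}\cup\{0\}$ and $\mathbb{Q}_V[\mathbf{i}]=\{x+y\mathbf{i}: x,y\in\mathbb{Q}_V\}$. *)

From HB Require Import structures.
From mathcomp Require Import all_boot all_order all_algebra.
From mathcomp Require Import reals.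
From mathcomp Require Export complex.
Set Implicit Arguments. Unset Strict Implicit. Unset Printing Implicit Defensive.
Import Order.TTheory GRing.Theory Num.Theory.
Local Open Scope ring_scope.

Definition QV {R : realType} (V : nat) (x : R) : Prop :=
  x = 0 \/
  exists p q : nat, [/\ (1 <= p <= V)%N, (1 <= q <= V)%N &
                     (x = p%:R / q%:R \/ x = - (p%:R / q%:R))].

Definition QVi {R : realType} (V : nat) (z : R[i]) : Prop :=
  exists x y : R, [/\ QV V x, QV V y & z = (x +i* y)%C].

(* rho = (b1 - b2) / (a1 - a2) and t = b1 - rho a1 are obtained from the
   Gaussian rationals a_j, b_j by subtractions, products and one division.
   Each operation stays inside some Q_V[i], with V growing polynomially:
   on real parts Q_V + Q_W and Q_V Q_W lie in Q_(2VW) and Q_(VW), and Q_V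
   is closed under inversion; on Gaussian rationals this gives Q_(2VW)[i]
   for differences, Q_(2(VW)^2)[i] for products and Q_(4V^2W^6)[i] for
   quotients (computed as (pr + qs + (qr - ps) i) / (r^2 + s^2)).  Starting
   from Q_U[i], these rules give exactly the exponents of the statement. *)
From HB Require Import structures.
From mathcomp Require Import all_boot all_order all_algebra.
From mathcomp Require Import reals.
From mathcomp Require Import complex.
From mathcomp Require Import ring lra.
Set Implicit Arguments.
Unset Strict Implicit.
Import Order.TTheory GRing.Theory Num.Theory.
Local Open Scope ring_scope.

Section BoundedFractions.
Context {R : numFieldType}.
Implicit Types (x y : R) (V W : nat).

Definition bounded_frac V x := exists n d : int,
  [/\ 0 < d <= V%:Z, `|n| <= V%:Z & x = n%:~R / d%:~R].

Lemma bounded_fracN V x : bounded_frac V x -> bounded_frac V (- x).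
Proof.
case=> n [d] [dV nV ->]; exists (- n), d; split=> //.
  by rewrite normrN.
by rewrite mulrNz mulNr.
Qed.

Lemma bounded_fracD V W x y :
  bounded_frac V x -> bounded_frac W y -> bounded_frac (2 * V * W) (x + y).
Proof.
case=> n [d] [/andP[d_gt0 dV] nV ->]; case=> m [e] [/andP[e_gt0 eW] mW ->].
exists (n * e + m * d), (d * e); rewrite !PoszM; split.
- by apply/andP; split; nra.
- by rewrite (le_trans (ler_normD _ _)) // !normrM (gtr0_norm d_gt0) (gtr0_norm e_gt0); nra.
- have d0 : d%:~R != 0 :> R by rewrite intr_eq0 gt_eqF.
  have e0 : e%:~R != 0 :> R by rewrite intr_eq0 gt_eqF.
  by rewrite !(rmorphD, rmorphM) /=; field; rewrite d0 e0.
Qed.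

Lemma bounded_fracB V W x y :
  bounded_frac V x -> bounded_frac W y -> bounded_frac (2 * V * W) (x - y).
Proof. by move=> xV /bounded_fracN; apply: bounded_fracD. Qed.

Lemma bounded_fracM V W x y :
  bounded_frac V x -> bounded_frac W y -> bounded_frac (V * W) (x * y).
Proof.
case=> n [d] [/andP[d_gt0 dV] nV ->]; case=> m [e] [/andP[e_gt0 eW] mW ->].
exists (n * m), (d * e); rewrite !PoszM; split.
- by apply/andP; split; nra.
- by rewrite normrM ler_pM.
- by rewrite !rmorphM /= invfM mulrACA.
Qed.

(* No nonzero hypothesis is needed since [0^-1 = 0]. *)
Lemma bounded_fracV V x : bounded_frac V x -> bounded_frac V x^-1.
Proof.
case=> n [d] [/andP[d_gt0 dV] nV ->]; rewrite invf_div.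
have [n_ge0 | n_lt0] := leP 0 n; [rewrite ger0_norm // in nV | rewrite ltr0_norm // in nV].
- have [-> | n0] := eqVneq n 0.
    by exists 0, d; rewrite normr0 d_gt0 dV mulr0z invr0 mulr0 mul0r.
  by exists d, n; rewrite gtr0_norm // lt_def n0 n_ge0 dV nV.
- exists (- d), (- n); rewrite normrN gtr0_norm // oppr_gt0 n_lt0 dV nV.
  by split=> //; rewrite !mulrNz invrN mulNr mulrN opprK.
Qed.

End BoundedFractions.

Section BoundedComplexFractions.
Context {R : realFieldType}.
Implicit Types (z w : R[i]) (V W : nat).

Definition bounded_cfrac V z :=
  bounded_frac V (complex.Re z) /\ bounded_frac V (complex.Im z).

Lemma bounded_cfracB V W z w : bounded_cfrac V z -> bounded_cfrac W w ->
  bounded_cfrac (2 * V * W) (z - w).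
Proof.
case: z w => p q [r s] [pV qV] [rW sW].
by split; apply: bounded_fracB.
Qed.

Lemma bounded_cfracM V W z w : bounded_cfrac V z -> bounded_cfrac W w ->
  bounded_cfrac (2 * (V * W) ^ 2) (z * w).
Proof.
case: z w => p q [r s] [pV qV] [rW sW].
rewrite expnS expn1 mulnA.
by split; [apply: bounded_fracB | apply: bounded_fracD]; apply: bounded_fracM.
Qed.

Lemma bounded_cfrac_div V W z w : bounded_cfrac V z -> bounded_cfrac W w ->
  bounded_cfrac (4 * V ^ 2 * W ^ 6) (z / w).
Proof.
case: z w => p q [r s] [pV qV] [rW sW].
have invnormW : bounded_frac (2 * W ^ 4) (r ^+ 2 + s ^+ 2)^-1.
  rewrite (_ : 2 * W ^ 4 = 2 * (W * W) * (W * W))%N; last by ring.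
  by apply/bounded_fracV/bounded_fracD; rewrite expr2; apply: bounded_fracM.
have dotV (a b c e : R) : bounded_frac V a -> bounded_frac V b ->
    bounded_frac W c -> bounded_frac W e -> bounded_frac (2 * (V * W) ^ 2) (a * c + b * e).
  rewrite expnS expn1 mulnA => aV bV cW eW.
  by apply: bounded_fracD; apply: bounded_fracM.
rewrite (_ : 4 * V ^ 2 * W ^ 6 = 2 * (V * W) ^ 2 * (2 * W ^ 4))%N; last by ring.
split; [rewrite (_ : complex.Re _ = (p * r + q * s) / (r ^+ 2 + s ^+ 2))
       | rewrite (_ : complex.Im _ = (q * r + p * - s) / (r ^+ 2 + s ^+ 2))].
- by apply: bounded_fracM invnormW; apply: dotV.
- by rewrite /=; ring.
- by apply: bounded_fracM invnormW; apply: dotV => //; apply: bounded_fracN.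
- by rewrite /=; ring.
Qed.

End BoundedComplexFractions.

Section QV.
Context {R : realType}.
Implicit Types (x : R) (z : R[i]) (V : nat).

Lemma QVi0 z : QVi 0 z -> z = 0.
Proof.
have QV0 x : QV 0 x -> x = 0.
  by case=> // -[p] [q] [/andP[p_gt0 p_le0]]; have := leq_trans p_gt0 p_le0.
by case=> x [y] [/QV0 -> /QV0 -> ->].
Qed.

Lemma bounded_fracP V x : (0 < V)%N -> bounded_frac V x <-> QV V x.
Proof.
move=> V_gt0; split.
  case=> n [d] [/andP[+ +] nV ->]; case: d => // q; rewrite ltz_nat lez_nat => q_gt0 qV.
  case: n nV => [[|p]|p] pV; first by left; rewrite mul0r.
    by right; exists p.+1, q; rewrite q_gt0 qV; split=> //; left.
  right; exists p.+1, q; rewrite q_gt0 qV; split=> //.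
  by right; rewrite NegzE mulrNz mulNr.
case=> [->|[p] [q] [/andP[p_gt0 pV] /andP[q_gt0 qV] [] ->]].
- by exists 0, 1; rewrite normr0 mul0r !lez_nat V_gt0.
- by exists p, q; rewrite ltz_nat !lez_nat q_gt0 qV pV.
- exists (- p%:Z), q; rewrite ltz_nat normrN !lez_nat q_gt0 qV pV.
  by rewrite mulrNz mulNr.
Qed.

Lemma bounded_cfracP V z : (0 < V)%N -> bounded_cfrac V z <-> QVi V z.
Proof.
move=> V_gt0; split.
  by case: z => x y [/(bounded_fracP _ V_gt0) xV /(bounded_fracP _ V_gt0) yV]; exists x, y.
by case=> x [y] [/(bounded_fracP _ V_gt0) xV /(bounded_fracP _ V_gt0) yV ->].
Qed.

End QV.

Theorem corollary2p3 (R : realType) (U : nat) (a1 a2 b1 b2 : R[i]) :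
  QVi U a1 -> QVi U a2 -> QVi U b1 -> QVi U b2 ->
  a1 != a2 -> b1 != b2 ->
  forall rho t : R[i], `|rho| = 1 ->
    b1 = rho * a1 + t -> b2 = rho * a2 + t ->
    QVi (2 ^ 10 * U ^ 16) rho /\ QVi (2 ^ 22 * U ^ 35) t.
Proof.
move=> a1U a2U b1U b2U a12 _ rho t _ b1E b2E.
have [U0 | U_gt0] := posnP U.
  by move: a1U a2U a12; rewrite U0 => /QVi0 -> /QVi0 ->; rewrite eqxx.
move: a1U a2U b1U b2U; rewrite -!(bounded_cfracP _ U_gt0) => a1U a2U b1U b2U.
have rhoE : rho = (b1 - b2) / (a1 - a2).
  by rewrite b1E b2E opprD addrACA subrr addr0 -mulrBr mulfK // subr_eq0.
have rhoV : bounded_cfrac (2 ^ 10 * U ^ 16) rho.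
  rewrite rhoE (_ : 2 ^ 10 * _ = 4 * (2 * U * U) ^ 2 * (2 * U * U) ^ 6)%N; last by ring.
  exact: bounded_cfrac_div (bounded_cfracB b1U b2U) (bounded_cfracB a1U a2U).
have tV : bounded_cfrac (2 ^ 22 * U ^ 35) (b1 - rho * a1).
  rewrite (_ : 2 ^ 22 * _ = 2 * U * (2 * (2 ^ 10 * U ^ 16 * U) ^ 2))%N; last by ring.
  exact: bounded_cfracB b1U (bounded_cfracM rhoV a1U).
rewrite b1E addrC addKr in tV.
have powU_gt0 k m : (0 < 2 ^ k * U ^ m)%N by rewrite muln_gt0 !expn_gt0 U_gt0.
by split; apply/(bounded_cfracP _ (powU_gt0 _ _)).
Qed.
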